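(* Let $Q=(q_n)_{n\ge1}$ be a basic sequence that is infinite in limit, and let $F\in\Gamma_Q$. Then there exists a sequence $F_1,F_2,F_3,\dots$ of elements of $\Gamma_Q$ such that $F_n\ne F$ for all $n$ and $\lim_{n\to\infty}d(F,F_n)=0$.
   Context: A basic sequence is a sequence $Q=(q_n)_{n\ge1}$ of integers with $q_n\ge 2$; it is infinite in limit if $q_n\to\infty$. $\mathbb{N}$ denotes the positive integers. For each positive integer $j$ let $\nu_j=\min\{N : q_m\ge 2j^2 \text{ for all } m\ge N\}$. Define $l_1=\max(\nu_2-1,1)$ and, recursively for $i\ge 2$, $l_i=\max\big(\min\{k\in\mathbb{N} : l_1+2l_2+\cdots+(i-1)l_{i-1}+ik\ge \nu_{i+1}-1\},1\big)$. Put $L_i=\sum_{j=1}^i jl_j$ (with $L_0=0$). Let $S_Q=\{(a,b,c)\in\mathbb{N}^3 : b\le l_a,\ c\le a\}$ and $\phi_Q(a,b,c)=L_{a-1}+(b-1)a+c$; $\phi_Q$ is a bijection $S_Q\to\mathbb{N}$. A $Q$-special sequence is a family of integers $F=(F_{(a,b,c)})_{(a,b,c)\in S_Q}$ with $F_{(a,b,1)}=0$ for all $(a,b,1)\in S_Q$ and $\frac{F_{(a,b,c)}}{q_{\phi_Q(a,b,c)}}\in\left[\frac{c-1}{a}-\frac{1}{2a^2},\frac{c-1}{a}+\frac{1}{2a^2}\right]$ for $(a,b,c)\in S_Q$ with $c>1$. Let $\Gamma_Q$ be the set of $Q$-special sequences, and for $F\in\Gamma_Q$ put $E_{F,n}=F_{\phi_Q^{-1}(n)}$.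 For $F_1\ne F_2$ in $\Gamma_Q$ let $\zeta_{F_1,F_2}=\min\{n : E_{F_1,n}\ne E_{F_2,n}\}$ and define $d(F_1,F_2)=\frac{1}{q_1q_2\cdots q_{\zeta_{F_1,F_2}-1}}$ (empty product equal to $1$); set $d(F,F)=0$. *)

From Stdlib Require Import Reals Lra Lia ZArith Arith Classical ClassicalEpsilon.
Open Scope R_scope.

(* A sequence Q = (q_n)_{n>=1} is modelled as q : nat -> nat; the value q 0 is ignored. *)
Definition basic_sequence (q : nat -> nat) : Prop :=
  forall n : nat, (1 <= n)%nat -> (2 <= q n)%nat.

Definition infinite_in_limit (q : nat -> nat) : Prop :=
  forall M : nat, exists N : nat, forall n : nat, (N <= n)%nat -> (M <= q n)%nat.

(* least n with P n (arbitrary if no such n exists) *)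
Definition least (P : nat -> Prop) : nat :=
  epsilon (inhabits 0%nat) (fun n => P n /\ forall m, P m -> (n <= m)%nat).

Definition nu (q : nat -> nat) (j : nat) : nat :=
  least (fun N => (1 <= N)%nat /\
                  forall m : nat, (N <= m)%nat -> (2 * j * j <= q m)%nat).

(* lstep q p Lp = l_{p+1}, given Lp = L_p *)
Definition lstep (q : nat -> nat) (p Lp : nat) : nat :=
  match p with
  | O => Nat.max (nu q 2 - 1) 1
  | S _ => Nat.max
             (least (fun k => (1 <= k)%nat /\
                       (nu q (p + 2) - 1 <= Lp + (p + 1) * k)%nat)) 1
  end.

Fixpoint Lsum (q : nat -> nat) (i : nat) : nat :=
  match i with
  | O => O
  | S p => (Lsum q p + S p * lstep q p (Lsum q p))%nat
  end.

(* l_i for i >= 1 *)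
Definition lseq (q : nat -> nat) (i : nat) : nat :=
  lstep q (i - 1) (Lsum q (i - 1)).

Definition inSQ (q : nat -> nat) (t : nat * nat * nat) : Prop :=
  match t with
  | (a, b, c) => (1 <= a)%nat /\ (1 <= b)%nat /\ (1 <= c)%nat /\
                 (b <= lseq q a)%nat /\ (c <= a)%nat
  end.

Definition SQ (q : nat -> nat) : Type := { t : nat * nat * nat | inSQ q t }.

Definition phiQ (q : nat -> nat) (t : nat * nat * nat) : nat :=
  match t with
  | (a, b, c) => (Lsum q (a - 1) + (b - 1) * a + c)%nat
  end.

Definition special (q : nat -> nat) (F : SQ q -> Z) : Prop :=
  forall s : SQ q,
    match proj1_sig s with
    | (a, b, c) =>
        (c = 1%nat -> F s = 0%Z) /\
        ((1 < c)%nat ->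
           (INR (c - 1) / INR a - 1 / (2 * INR a ^ 2)
              <= IZR (F s) / INR (q (phiQ q (a, b, c))))
           /\ IZR (F s) / INR (q (phiQ q (a, b, c)))
              <= INR (c - 1) / INR a + 1 / (2 * INR a ^ 2))
    end.

(* E_{F,n} = F_{phi^{-1}(n)}; zeta = min { n : E_{F1,n} <> E_{F2,n} } *)
Definition zeta (q : nat -> nat) (F1 F2 : SQ q -> Z) : nat :=
  least (fun n => exists s : SQ q, phiQ q (proj1_sig s) = n /\ F1 s <> F2 s).

Fixpoint prodq (q : nat -> nat) (n : nat) : nat :=
  match n with
  | O => 1%nat
  | S p => (prodq q p * q (S p))%nat
  end.

Definition dQ (q : nat -> nat) (F1 F2 : SQ q -> Z) : R :=
  if excluded_middle_informative (F1 = F2) then 0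
  else 1 / INR (prodq q (zeta q F1 F2 - 1)).

From Stdlib Require Import Reals ZArith.
From Stdlib Require Import Lra Lia Wf_nat Classical ClassicalEpsilon.
Open Scope R_scope.

(* The n-th neighbour of F changes F only at the index (n+2, 1, 2), by +1 or -1.
   Since q_m >= 2 (n+2)^2 at phi_Q(n+2, 1, 2), the admissible interval for
   F/q there has width 1/(n+2)^2 >= 2/q, so one of the two changes stays
   admissible.  The first disagreement then occurs at zeta = phi_Q(n+2, 1, 2) > n+1,
   and d(F, F_n) = 1/(q_1 ... q_(zeta-1)) <= 1/zeta, because every q_m >= 2. *)

Lemma least_spec (P : nat -> Prop) :
  (exists n, P n) -> P (least P) /\ forall m, P m -> (least P <= m)%nat.
Proof.
  intros HP.
  destruct (dec_inh_nat_subset_has_unique_least_element P (fun n => classic (P n)) HP)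
    as [n [Hn _]].
  apply (epsilon_spec (inhabits 0%nat) (fun n => P n /\ forall m, P m -> (n <= m)%nat)).
  now exists n.
Qed.

Lemma least_unique (P : nat -> Prop) (n : nat) :
  P n -> (forall m, P m -> m = n) -> least P = n.
Proof.
  intros Hn Huniq. apply Huniq, least_spec. now exists n.
Qed.

Lemma nu_spec q j : infinite_in_limit q ->
  (1 <= nu q j)%nat /\ forall m, (nu q j <= m)%nat -> (2 * j * j <= q m)%nat.
Proof.
  intros Hinf. destruct (Hinf (2 * j * j)%nat) as [N HN].
  unfold nu.
  apply (least_spec (fun N => (1 <= N)%nat /\ forall m, (N <= m)%nat -> (2 * j * j <= q m)%nat)).
  exists (Nat.max N 1). split; [lia |]. intros m Hm. apply HN. lia.
Qed.

Lemma lstep_ge1 q p Lp : (1 <= lstep q p Lp)%nat.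
Proof. destruct p; apply Nat.le_max_r. Qed.

Lemma Lsum_ge q p : (p <= Lsum q p)%nat.
Proof.
  induction p as [| p IH]; simpl; [lia |].
  pose proof (lstep_ge1 q p (Lsum q p)). nia.
Qed.

Lemma nu_pred_le_Lsum q p : (nu q (p + 2) - 1 <= Lsum q (S p))%nat.
Proof.
  destruct p as [| p]; [simpl; lia |].
  change (Lsum q (S (S p))) with (Lsum q (S p) + S (S p) * lstep q (S p) (Lsum q (S p)))%nat.
  unfold lstep; cbv beta iota.
  set (P := fun k => (1 <= k)%nat /\ (nu q (S p + 2) - 1 <= Lsum q (S p) + (S p + 1) * k)%nat).
  destruct (least_spec P) as [[_ Hk] _].
  { exists (Nat.max (nu q (S p + 2)) 1). split; [lia | nia]. }
  set (k := least P) in *.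
  assert ((S p + 1) * k <= S (S p) * Nat.max k 1)%nat by nia.
  lia.
Qed.

Lemma prodq_ge q k : basic_sequence q -> (k + 1 <= prodq q k)%nat.
Proof.
  intros Hb. induction k as [| k IH]; simpl; [lia |].
  pose proof (Hb (S k) ltac:(lia)). nia.
Qed.

Lemma Un_cv_0_of_le_inv_INR (u : nat -> R) :
  (forall n, 0 <= u n <= / INR (S n)) -> Un_cv u 0.
Proof.
  intros Hu eps Heps.
  destruct (archimed_cor1 eps Heps) as [N [HN HN0]].
  exists N. intros n Hn. unfold R_dist. rewrite Rminus_0_r.
  destruct (Hu n) as [Hu0 Hu1].
  rewrite Rabs_right by lra.
  enough (/ INR (S n) <= / INR N) by lra.
  apply Rinv_le_contravar; [apply lt_0_INR; lia | apply le_INR; lia].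
Qed.

Definition special_lo (a c : nat) : R := INR (c - 1) / INR a - 1 / (2 * INR a ^ 2).
Definition special_hi (a c : nat) : R := INR (c - 1) / INR a + 1 / (2 * INR a ^ 2).

Lemma special_bounds q F (s : SQ q) a b c :
  special q F -> proj1_sig s = (a, b, c) -> (1 < c)%nat ->
  special_lo a c <= IZR (F s) / INR (q (phiQ q (a, b, c))) <= special_hi a c.
Proof.
  intros HF Hs Hc. specialize (HF s). rewrite Hs in HF.
  exact (proj2 HF Hc).
Qed.

Lemma special_width_ge (a c : nat) (Q : R) :
  (1 <= a)%nat -> 2 * INR a ^ 2 <= Q -> 2 / Q <= special_hi a c - special_lo a c.
Proof.
  intros Ha HQ. unfold special_hi, special_lo.
  assert (Ha' : 0 < INR a) by (apply lt_0_INR; lia).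
  assert (Hpos : 0 < 2 * INR a ^ 2) by nra.
  replace (_ - _) with (2 * / (2 * INR a ^ 2)) by (field; lra).
  unfold Rdiv. apply Rmult_le_compat_l; [lra |].
  now apply Rinv_le_contravar.
Qed.

Definition nudge (hi Q : R) (x : Z) : Z :=
  if Rle_dec (IZR (x + 1) / Q) hi then (x + 1)%Z else (x - 1)%Z.

Lemma nudge_neq hi Q x : nudge hi Q x <> x.
Proof. unfold nudge. destruct Rle_dec; lia. Qed.

Lemma nudge_in_interval (lo hi Q : R) (x : Z) :
  0 < Q -> 2 / Q <= hi - lo -> lo <= IZR x / Q <= hi ->
  lo <= IZR (nudge hi Q x) / Q <= hi.
Proof.
  intros HQ Hwidth Hx. unfold nudge.
  assert (Hstep : 0 < 1 / Q) by (unfold Rdiv; rewrite Rmult_1_l; now apply Rinv_0_lt_compat).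
  assert (Hwidth' : 2 * (1 / Q) <= hi - lo) by (unfold Rdiv in *; lra).
  assert (Eplus : IZR (x + 1) / Q = IZR x / Q + 1 / Q) by (rewrite plus_IZR; field; lra).
  assert (Eminus : IZR (x - 1) / Q = IZR x / Q - 1 / Q) by (rewrite minus_IZR; field; lra).
  destruct Rle_dec as [Hle | Hgt].
  - rewrite Eplus in *. lra.
  - rewrite Eplus in Hgt. rewrite Eminus. lra.
Qed.

Definition update q (F : SQ q -> Z) (t : nat * nat * nat) (v : Z) : SQ q -> Z :=
  fun s => if excluded_middle_informative (proj1_sig s = t) then v else F s.

Lemma update_at q F (s0 : SQ q) v : update q F (proj1_sig s0) v s0 = v.
Proof. unfold update. now destruct excluded_middle_informative. Qed.

Lemma update_neq q F (s0 : SQ q) v : v <> F s0 -> update q F (proj1_sig s0) v <> F.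
Proof.
  intros Hv E. apply Hv. rewrite <- (update_at q F s0 v). now rewrite E.
Qed.

Lemma special_update q F a b c v :
  special q F -> (1 < c)%nat ->
  special_lo a c <= IZR v / INR (q (phiQ q (a, b, c))) <= special_hi a c ->
  special q (update q F (a, b, c) v).
Proof.
  intros HF Hc Hv s. unfold update.
  destruct excluded_middle_informative as [E | _]; [| apply HF].
  rewrite E. split; [lia | intros _; exact Hv].
Qed.

Lemma zeta_update q F (s0 : SQ q) v :
  v <> F s0 -> zeta q F (update q F (proj1_sig s0) v) = phiQ q (proj1_sig s0).
Proof.
  intros Hv. apply least_unique.
  - exists s0. rewrite update_at. auto.
  - intros m [s [Hs Hdiff]]. subst m. unfold update in Hdiff.
    destruct excluded_middle_informative as [E | _]; [now rewrite E | congruence].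
Qed.

Lemma dQ_update q F (s0 : SQ q) v :
  v <> F s0 ->
  dQ q F (update q F (proj1_sig s0) v) = 1 / INR (prodq q (phiQ q (proj1_sig s0) - 1)).
Proof.
  intros Hv. unfold dQ. destruct excluded_middle_informative as [E | _].
  - exfalso. exact (update_neq q F s0 v Hv (eq_sym E)).
  - now rewrite zeta_update.
Qed.

Definition pivot (a : nat) : nat * nat * nat := (a, 1, 2)%nat.

Lemma pivot_inSQ q a : (2 <= a)%nat -> inSQ q (pivot a).
Proof.
  intros Ha. pose proof (lstep_ge1 q (a - 1) (Lsum q (a - 1))).
  unfold inSQ, pivot, lseq. lia.
Qed.

Lemma phiQ_pivot_ge q a : (2 <= a)%nat -> (a <= phiQ q (pivot a) - 1)%nat.
Proof. intros Ha. pose proof (Lsum_ge q (a - 1)). unfold phiQ, pivot. lia. Qed.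

Lemma q_at_pivot_ge q a : infinite_in_limit q -> (2 <= a)%nat ->
  (2 * a * a <= q (phiQ q (pivot a)))%nat.
Proof.
  intros Hinf Ha. apply (nu_spec q a Hinf).
  pose proof (nu_pred_le_Lsum q (a - 2)) as H.
  replace (a - 2 + 2)%nat with a in H by lia.
  replace (S (a - 2)) with (a - 1)%nat in H by lia.
  unfold phiQ, pivot. lia.
Qed.

Definition pivotSQ q n : SQ q :=
  exist _ (pivot (n + 2)) (pivot_inSQ q (n + 2) (Nat.le_add_l 2 n)).

Definition neighbour q (F : SQ q -> Z) (n : nat) : SQ q -> Z :=
  update q F (pivot (n + 2))
    (nudge (special_hi (n + 2) 2) (INR (q (phiQ q (pivot (n + 2))))) (F (pivotSQ q n))).

Lemma neighbour_special q F n :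
  infinite_in_limit q -> special q F -> special q (neighbour q F n).
Proof.
  intros Hinf HF. apply special_update; [exact HF | lia |].
  assert (Hq : 2 * INR (n + 2) ^ 2 <= INR (q (phiQ q (pivot (n + 2))))).
  { pose proof (q_at_pivot_ge q (n + 2) Hinf ltac:(lia)) as Hq.
    apply le_INR in Hq. rewrite !mult_INR in Hq.
    replace (INR 2) with 2 in Hq by (simpl; ring). nra. }
  assert (0 < INR (n + 2) ^ 2) by (apply pow_lt, lt_0_INR; lia).
  apply nudge_in_interval.
  - unfold pivot in Hq. lra.
  - apply special_width_ge; [lia | exact Hq].
  - apply (special_bounds q F (pivotSQ q n) (n + 2) 1 2); [exact HF | reflexivity | lia].
Qed.

Lemma neighbour_neq q F n : neighbour q F n <> F.
Proof. apply (update_neq q F (pivotSQ q n)), nudge_neq. Qed.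

Lemma dQ_neighbour_bounds q F n : basic_sequence q ->
  0 <= dQ q F (neighbour q F n) <= / INR (S n).
Proof.
  intros Hb. unfold neighbour.
  change (pivot (n + 2)) with (proj1_sig (pivotSQ q n)).
  rewrite dQ_update by apply nudge_neq.
  change (proj1_sig (pivotSQ q n)) with (pivot (n + 2)).
  pose proof (phiQ_pivot_ge q (n + 2) ltac:(lia)) as Hphi.
  pose proof (prodq_ge q (phiQ q (pivot (n + 2)) - 1) Hb) as Hprod.
  assert (Hle : INR (S n) <= INR (prodq q (phiQ q (pivot (n + 2)) - 1)))
    by (apply le_INR; lia).
  assert (0 < INR (S n)) by (apply lt_0_INR; lia).
  unfold Rdiv. rewrite Rmult_1_l. split.
  - left. apply Rinv_0_lt_compat. lra.
  - now apply Rinv_le_contravar.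
Qed.

Theorem mainTheorem19 (q : nat -> nat)
  (Hbasic : basic_sequence q) (Hinf : infinite_in_limit q)
  (F : SQ q -> Z) (HF : special q F) :
  exists Fs : nat -> (SQ q -> Z),
    (forall n : nat, special q (Fs n)) /\
    (forall n : nat, Fs n <> F) /\
    Un_cv (fun n => dQ q F (Fs n)) 0.
Proof.
  exists (neighbour q F). split; [| split].
  - intros n. now apply neighbour_special.
  - apply neighbour_neq.
  - apply Un_cv_0_of_le_inv_INR. intros n. now apply dQ_neighbour_bounds.
Qed.
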